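(* Let $A\in\mathbb{R}^{m\times n}$ and $b\in\mathbb{R}^m$ be such that the linear system $Ax=b$ is consistent, let $\ell$ be a positive integer, and let $x^0\in\operatorname{Range}(A^\top)$. Let $\{S_k\}_{k\ge 0}\subset\mathbb{R}^{m\times q}$ be matrices and let $\{x^k\}_{k\ge1}$ be defined recursively by $$x^{k+1}=\arg\min_{x\in\Pi_k}\|x-A^\dagger b\|_2^2,\qquad \Pi_k=\operatorname{aff}\{x^{j_k},\ldots,x^k,\;x^k-A^\top S_kS_k^\top(Ax^k-b)\},$$ where $j_k=\max\{k-\ell+1,0\}$. Define $$M_k=\big(x^{j_k}-x^k,\ \ldots,\ x^{k-1}-x^k,\ -A^\top S_kS_k^\top(Ax^k-b)\big)\in\mathbb{R}^{n\times(k-j_k+1)}$$ (when $j_k=k$, $M_k$ consists only of its last column). If $S_i^\top(Ax^i-b)\neq 0$ for $i=0,\ldots,k$, then $M_k$ has full column rank.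
   Context: $A^\dagger$ denotes the Moore–Penrose pseudoinverse of $A$. For vectors $y^1,\dots,y^p$, $\operatorname{aff}\{y^1,\dots,y^p\}=\{\sum_i\alpha_iy^i:\sum_i\alpha_i=1,\ \alpha_i\in\mathbb{R}\}$ is their affine hull. The minimizer of the strictly convex function $\|x-A^\dagger b\|_2^2$ over the affine set $\Pi_k$ is the orthogonal projection of $A^\dagger b$ onto $\Pi_k$. *)

From HB Require Import structures.
From mathcomp Require Import all_boot all_order all_algebra.
From mathcomp Require Import reals.
Unset Printing Implicit Defensive.
Import Order.TTheory GRing.Theory Num.Theory.
Local Open Scope ring_scope.

(* P is the Moore--Penrose pseudoinverse of A (the four Penrose equations;
   such a P exists and is unique). *)
Definition is_pinv (R : realType) (m n : nat) (A : 'M[R]_(m, n)) (P : 'M[R]_(n, m)) :=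
  [/\ A *m P *m A = A, P *m A *m P = P,
      (A *m P)^T = A *m P & (P *m A)^T = P *m A].
Arguments is_pinv {R m n} A P.

Definition sqnorm (R : realType) (n : nat) (v : 'cV[R]_n) : R :=
  \sum_(i < n) v i 0 ^+ 2.
Arguments sqnorm {R n} v.

Definition aff (R : realType) (n p : nat) (y : 'I_p -> 'cV[R]_n) (v : 'cV[R]_n) : Prop :=
  exists a : 'I_p -> R, \sum_(i < p) a i = 1 /\ v = \sum_(i < p) a i *: y i.
Arguments aff {R n p} y v.

Definition is_argmin (T R : Type) (le : R -> R -> Prop) (P : T -> Prop) (f : T -> R) (v : T) :=
  P v /\ forall w, P w -> le (f v) (f w).
Arguments is_argmin {T R} le P f v.

(* j_k = max{k - l + 1, 0} (truncated nat subtraction) *)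
Definition jk (l k : nat) : nat := (k.+1 - l)%N.

Definition dir (R : realType) (m n q : nat) (A : 'M[R]_(m, n)) (b : 'cV[R]_m)
  (S : nat -> 'M[R]_(m, q)) (x : nat -> 'cV[R]_n) (k : nat) : 'cV[R]_n :=
  A^T *m (S k *m ((S k)^T *m (A *m x k - b))).
Arguments dir {R m n q} A b S x k.

Definition Pi_gen (R : realType) (m n q : nat) (l : nat) (A : 'M[R]_(m, n)) (b : 'cV[R]_m)
  (S : nat -> 'M[R]_(m, q)) (x : nat -> 'cV[R]_n) (k : nat) (i : 'I_(k - jk l k + 2)) : 'cV[R]_n :=
  if (i < k - jk l k + 1)%N then x (jk l k + i)%N else x k - dir A b S x k.
Arguments Pi_gen {R m n q} l A b S x k i.

Definition Mk (R : realType) (m n q : nat) (l : nat) (A : 'M[R]_(m, n)) (b : 'cV[R]_m)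
  (S : nat -> 'M[R]_(m, q)) (x : nat -> 'cV[R]_n) (k : nat) : 'M[R]_(n, k - jk l k + 1) :=
  \matrix_(r < n, c < k - jk l k + 1)
    (if (c < k - jk l k)%N then (x (jk l k + c)%N - x k) r 0 else (- dir A b S x k) r 0).

Arguments Mk {R m n q} l A b S x k.

From HB Require Import structures.
From mathcomp Require Import all_boot all_order all_algebra.
From mathcomp Require Import reals.
From mathcomp Require Import ring lra zify.

Set Implicit Arguments.
Unset Strict Implicit.
Unset Printing Implicit Defensive.

Import Order.TTheory GRing.Theory Num.Theory.
Local Open Scope ring_scope.

(* Write e_i = x^i - A^+ b and d_i = A^T S_i S_i^T (A x^i - b).  Since x^(i+1) is
   the orthogonal projection of A^+ b onto Pi_i, e_(i+1) is orthogonal to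
   Pi_i - x^(i+1).  Applied to the iterates x^a in Pi_i this gives
   <e_a, e_c> = |e_c|^2 for j_k <= a <= c <= k; applied to x^i - d_i, together with
   <e_i, d_i> = |S_i^T (A x^i - b)|^2 > 0, it gives e_i <> e_(i+1).  Pairing the
   columns of M_k with the test vectors e_a - e_(a+1) (j_k <= a < k) and e_k thus
   yields a block matrix [[L, *], [0, - <e_k, d_k>]] with L lower triangular with
   nonzero diagonal, hence invertible, so M_k has full column rank. *)

Section FullColumnRank.
Variable F : fieldType.

Lemma trig_unitmx n (G : 'M[F]_n) :
  is_trig_mx G -> (forall i, G i i != 0) -> G \in unitmx.
Proof. by move=> trigG diagG; rewrite unitmxE det_trig // unitfE; apply/prodf_neq0. Qed.

Lemma mxrank_unit_mul_tr n p (W M : 'M[F]_(n, p)) :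
  W^T *m M \in unitmx -> \rank M = p.
Proof.
move=> /mxrank_unit rWM; apply/eqP.
by rewrite eqn_leq rank_leq_col -{1}rWM mxrankM_maxr.
Qed.

Lemma mxrank_row_mx_unit_tr n p (V W : 'M[F]_(n, p)) (d w : 'cV[F]_n) :
  W^T *m V \in unitmx -> w^T *m V = 0 -> (w^T *m d) 0 0 != 0 ->
  \rank (row_mx V d) = (p + 1)%N.
Proof.
move=> WV wV wd; apply: (@mxrank_unit_mul_tr _ _ (row_mx W w)).
rewrite tr_row_mx mul_col_row wV unitmxE det_ublock unitrM -!unitmxE WV.
by rewrite unitmxE det_mx11 unitfE.
Qed.

End FullColumnRank.

Definition cols_mx (R : Type) n p (v : 'I_p -> 'cV[R]_n) : 'M[R]_(n, p) :=
  \matrix_(r, c) v c r 0.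

Section DotProduct.
Variable R : realFieldType.

Definition dot n (u v : 'cV[R]_n) : R := (u^T *m v) 0 0.

Lemma dotC n (u v : 'cV[R]_n) : dot u v = dot v u.
Proof. by rewrite /dot -[v^T *m u]trmxK trmx_mul trmxK [in RHS]mxE. Qed.

Lemma dotDr n (u v w : 'cV[R]_n) : dot u (v + w) = dot u v + dot u w.
Proof. by rewrite /dot mulmxDr mxE. Qed.

Lemma dotZr n (u v : 'cV[R]_n) a : dot u (a *: v) = a * dot u v.
Proof. by rewrite /dot -scalemxAr mxE. Qed.

Lemma dotNr n (u v : 'cV[R]_n) : dot u (- v) = - dot u v.
Proof. by rewrite /dot mulmxN mxE. Qed.

Lemma dotBr n (u v w : 'cV[R]_n) : dot u (v - w) = dot u v - dot u w.
Proof. by rewrite dotDr dotNr. Qed.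

Lemma dotDl n (u v w : 'cV[R]_n) : dot (u + v) w = dot u w + dot v w.
Proof. by rewrite dotC dotDr !(dotC w). Qed.

Lemma dotZl n (u v : 'cV[R]_n) a : dot (a *: u) v = a * dot u v.
Proof. by rewrite dotC dotZr dotC. Qed.

Lemma dotBl n (u v w : 'cV[R]_n) : dot (u - v) w = dot u w - dot v w.
Proof. by rewrite dotC dotBr !(dotC w). Qed.

Lemma dotBB n (u v w z : 'cV[R]_n) :
  dot (u - v) (w - z) = dot u w - dot u z - (dot v w - dot v z).
Proof. by rewrite dotBl !dotBr. Qed.

Lemma dot_mulmx m n (B : 'M[R]_(m, n)) u v : dot u (B *m v) = dot (B^T *m u) v.
Proof. by rewrite /dot trmx_mul trmxK mulmxA. Qed.

Lemma dot_selfE n (v : 'cV[R]_n) : dot v v = \sum_i v i 0 ^+ 2.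
Proof. by rewrite /dot mxE; apply: eq_bigr => i _; rewrite mxE expr2. Qed.

Lemma dot_self_eq0 n (v : 'cV[R]_n) : (dot v v == 0) = (v == 0).
Proof.
apply/eqP/eqP => [|->]; last by rewrite /dot mulmx0 mxE.
rewrite dot_selfE => /psumr_eq0P v0; apply/matrixP => i j.
by rewrite ord1 mxE; apply/eqP; rewrite -sqrf_eq0 v0 // => k _; apply: sqr_ge0.
Qed.

Lemma mul_tr_cols_mx n p p' (u : 'I_p -> 'cV[R]_n) (v : 'I_p' -> 'cV[R]_n) i j :
  ((cols_mx u)^T *m cols_mx v) i j = dot (u i) (v j).
Proof. by rewrite /dot !mxE; apply: eq_bigr => r _; rewrite !mxE. Qed.

Lemma mul_tr_cols_mx1 n p (w : 'cV[R]_n) (v : 'I_p -> 'cV[R]_n) i j :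
  (w^T *m cols_mx v) i j = dot w (v j).
Proof. by rewrite /dot ord1 !mxE; apply: eq_bigr => r _; rewrite !mxE. Qed.

Lemma quadratic_ge0_linear_eq0 (a s : R) : (forall t, 0 <= 2 * t * a + t ^+ 2 * s) -> a = 0.
Proof.
move=> ge0; pose c := `|s| + 1; have c_gt0 : 0 < c by rewrite ltr_pwDr.
have s_lt : s < 2 * c by have := ler_norm s; have := normr_ge0 s; rewrite /c; lra.
(* At t = - a / c the quadratic equals (a / c) ^+ 2 * (s - 2 * c), with s - 2 * c < 0. *)
pose u := a / c; have aE : a = u * c by rewrite /u divfK ?gt_eqF.
have := ge0 (- u); rewrite aE => le0.
suff : u ^+ 2 == 0 by rewrite sqrf_eq0 => /eqP u0; rewrite u0 mul0r.
rewrite eq_le sqr_ge0 andbT; nra.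
Qed.

End DotProduct.

Section ProjectionOntoAffineHull.
Variable R : realType.

Lemma sqnorm_dot n (v : 'cV[R]_n) : sqnorm v = dot v v.
Proof. by rewrite dot_selfE. Qed.

Lemma aff_gen p n (y : 'I_p -> 'cV[R]_n) i : aff y (y i).
Proof.
exists (fun j => (j == i)%:R); split.
  by rewrite (bigD1 i) //= eqxx big1 ?addr0 // => j /negbTE ->.
by rewrite (bigD1 i) //= eqxx scale1r big1 ?addr0 // => j /negbTE ->; rewrite scale0r.
Qed.

Lemma aff_line p n (y : 'I_p -> 'cV[R]_n) v w t :
  aff y v -> aff y w -> aff y (v + t *: (w - v)).
Proof.
move=> [a [a1 ->]] [c [c1 ->]].
exists (fun i => (1 - t) * a i + t * c i); split.
  by rewrite big_split /= -!mulr_sumr a1 c1; ring.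
rewrite scalerBr addrCA -{1}[\sum_i a i *: y i]scale1r -scalerBl.
rewrite !scaler_sumr -big_split /=; apply: eq_bigr => i _.
by rewrite !scalerA -scalerDl addrC.
Qed.

Lemma argmin_sqnorm_aff_orth p n (y : 'I_p -> 'cV[R]_n) c X :
  is_argmin (fun u v : R => u <= v) (aff y) (fun v => sqnorm (v - c)) X ->
  forall w, aff y w -> dot (X - c) (w - X) = 0.
Proof.
move=> [yX Xmin] w yw; apply: (quadratic_ge0_linear_eq0 (s := dot (w - X) (w - X))) => t.
have := Xmin _ (aff_line t yX yw).
rewrite addrAC !sqnorm_dot; move: (X - c) (w - X) => e d.
rewrite !(dotDl, dotDr, dotZl, dotZr) (dotC d e); nra.
Qed.

Lemma pinv_solve m n (A : 'M[R]_(m, n)) P (b : 'cV[R]_m) :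
  is_pinv A P -> (exists z, A *m z = b) -> A *m (P *m b) = b.
Proof. by case=> APA _ _ _ [z <-]; rewrite !mulmxA APA. Qed.

End ProjectionOntoAffineHull.

Section Iterates.
Variables (R : realType) (m n q l : nat) (A : 'M[R]_(m, n)) (b : 'cV[R]_m).
Variables (Adag : 'M[R]_(n, m)) (S : nat -> 'M[R]_(m, q)) (x : nat -> 'cV[R]_n).
Hypothesis Adag_solve : A *m (Adag *m b) = b.
Hypothesis x_argmin : forall k, is_argmin (fun u v : R => u <= v)
  (aff (Pi_gen l A b S x k)) (fun v => sqnorm (v - Adag *m b)) (x k.+1).

Let err i := x i - Adag *m b.
Let res i := (S i)^T *m (A *m x i - b).
Let d i := dir A b S x i.

Lemma x_subE a c : x a - x c = err a - err c.
Proof. by rewrite /err opprB addrA subrK. Qed.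

Lemma dot_err_dir i : dot (err i) (d i) = dot (res i) (res i).
Proof. by rewrite /d /dir dot_mulmx trmxK /err mulmxBr Adag_solve dot_mulmx. Qed.

Lemma Pi_gen_iterate i a : (jk l i <= a <= i)%N -> aff (Pi_gen l A b S x i) (x a).
Proof.
move=> /andP[ja ai]; have a_lt : (a - jk l i < i - jk l i + 2)%N by lia.
have := aff_gen (Pi_gen l A b S x i) (Ordinal a_lt).
by rewrite /Pi_gen /= ifT ?subnKC //; lia.
Qed.

Lemma Pi_gen_step i : aff (Pi_gen l A b S x i) (x i - d i).
Proof.
have last_lt : (i - jk l i + 1 < i - jk l i + 2)%N by lia.
by have := aff_gen (Pi_gen l A b S x i) (Ordinal last_lt); rewrite /Pi_gen /= ltnn.
Qed.

Lemma err_orth i w : aff (Pi_gen l A b S x i) w -> dot (err i.+1) (w - x i.+1) = 0.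
Proof. exact: argmin_sqnorm_aff_orth (x_argmin i) w. Qed.

Lemma err_step_neq0 i : res i != 0 -> err i - err i.+1 != 0.
Proof.
apply: contraNneq => /subr0_eq err_eq.
have := err_orth (Pi_gen_step i); rewrite addrAC x_subE err_eq subrr sub0r.
by rewrite dotNr -err_eq dot_err_dir => /eqP; rewrite oppr_eq0 dot_self_eq0.
Qed.

Lemma dot_err_le k a c : (jk l k <= a)%N -> (a <= c)%N -> (c <= k)%N ->
  dot (err a) (err c) = dot (err c) (err c).
Proof.
move=> ja; case: c => [|c] ac ck; first by have -> : a = 0%N by lia.
have [->|a_le] := eqVneq a c.+1; first by [].
have jac : (jk l c <= a <= c)%N by apply/andP; split; rewrite /jk in ja *; lia.
have := err_orth (Pi_gen_iterate jac); rewrite x_subE dotBr => /eqP.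
by rewrite subr_eq0 dotC => /eqP.
Qed.

Lemma dot_err_step_err_sub k a c : (jk l k <= a)%N -> (a < c)%N -> (c <= k)%N ->
  dot (err a - err a.+1) (err c - err k) = 0.
Proof. by move=> ja ac ck; rewrite dotBB !(@dot_err_le k) ?subrr //; lia. Qed.

Lemma dot_err_err_sub k c : (jk l k <= c)%N -> (c <= k)%N ->
  dot (err k) (err c - err k) = 0.
Proof. by move=> jc ck; rewrite dotBr dotC (@dot_err_le k) ?subrr. Qed.

Lemma Mk_row_mx k : Mk l A b S x k =
  row_mx (cols_mx (fun c : 'I_(k - jk l k) => x (jk l k + c)%N - x k)) (- d k).
Proof.
apply/matrixP => r c; rewrite mxE -(splitK c); case: (split c) => c' /=.
  by rewrite row_mxEl ltn_ord !mxE.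
by rewrite (row_mxEr (cols_mx _)) ord1 addn0 ltnn.
Qed.

Theorem Mk_full_col_rank k : (forall i, (i <= k)%N -> res i != 0) ->
  \rank (Mk l A b S x k) = (k - jk l k + 1)%N.
Proof.
move=> res_neq0; rewrite Mk_row_mx.
pose f (c : 'I_(k - jk l k)) := err (jk l k + c) - err (jk l k + c).+1.
apply: (mxrank_row_mx_unit_tr (W := cols_mx f) (w := err k)).
- apply: trig_unitmx => [|i].
    apply/is_trig_mxP => i j ij.
    by rewrite mul_tr_cols_mx x_subE dot_err_step_err_sub //; have := ltn_ord j; lia.
  have ik : (jk l k + i < k)%N by have := ltn_ord i; lia.
  rewrite mul_tr_cols_mx x_subE.
  have -> : err (jk l k + i) - err k = f i + (err (jk l k + i).+1 - err k).
    by rewrite /f addrA subrK.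
  rewrite dotDr (dot_err_step_err_sub (leq_addr _ _) (ltnSn _) ik).
  by rewrite addr0 dot_self_eq0; apply/err_step_neq0/res_neq0/ltnW.
- apply/matrixP => i j; rewrite mul_tr_cols_mx1 x_subE.
  by rewrite dot_err_err_sub ?mxE ?leq_addr //; have := ltn_ord j; lia.
- by rewrite -/(dot _ _) dotNr dot_err_dir oppr_eq0 dot_self_eq0 res_neq0.
Qed.

End Iterates.

Theorem proposition3p1 (R : realType) (m n q l : nat)
  (A : 'M[R]_(m, n)) (b : 'cV[R]_m) (Adag : 'M[R]_(n, m))
  (S : nat -> 'M[R]_(m, q)) (x : nat -> 'cV[R]_n) :
  is_pinv A Adag ->
  (exists z : 'cV[R]_n, A *m z = b) ->
  (0 < l)%N ->
  (exists y : 'cV[R]_m, x 0%N = A^T *m y) ->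
  (forall k : nat,
     is_argmin (fun u v : R => u <= v) (aff (Pi_gen l A b S x k))
       (fun v => sqnorm (v - Adag *m b)) (x k.+1)) ->
  forall k : nat,
    (forall i : nat, (i <= k)%N -> (S i)^T *m (A *m x i - b) != 0) ->
    \rank (Mk l A b S x k) = (k - jk l k + 1)%N.
Proof.
move=> Adag_pinv consistent _ _ x_argmin k.
exact: Mk_full_col_rank (pinv_solve Adag_pinv consistent) x_argmin k.
Qed.
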